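(* Let $p$ be a $\mathrm{Beta}(\alpha,\beta)$ random variable with $\alpha\ge1$ and $\beta\ge1$, and let $b$ be distributed, conditionally on $p$, as $\mathrm{Bern}(p)$. Let $\delta=1/m$ for an integer $m\ge 2$ and define $q=\lceil p/\delta\rceil$. Then $$\mathbb{I}(p; b) \geq \mathbb{I}(q; b) \geq \mathbb{I}(p; b) - \max \left \{ 3, \log \frac{1}{\delta} \right \} \delta.$$
   Context: $\mathbb{I}(\cdot;\cdot)$ denotes mutual information (natural logarithm). *)

From Stdlib Require Import Reals ZArith.
From Coquelicot Require Import Coquelicot.
Open Scope R_scope.

Definition Rceil (x : R) : Z := (- Int_part (- x))%Z.

(* Unnormalized Beta(a,b) kernel x^(a-1) (1-x)^(b-1) on (0,1), 0 outside
   (values at the endpoints 0,1 are irrelevant for the integrals). *)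
Definition beta_kernel (a b : R) (x : R) : R :=
  if Rlt_dec 0 x then if Rlt_dec x 1 then
    Rpower x (a - 1) * Rpower (1 - x) (b - 1) else 0 else 0.

Definition beta_pdf (a b : R) (x : R) : R :=
  beta_kernel a b x / RInt (beta_kernel a b) 0 1.

Definition xlogxy (u v : R) : R := if Req_EM_T u 0 then 0 else u * ln (u / v).

(* P(b = 1) = E[p] for p ~ Beta(a,b), b | p ~ Bern(p). *)
Definition Pb1 (a b : R) : R := RInt (fun x => x * beta_pdf a b x) 0 1.

(* I(p;b) (nats) for the joint law of (p,b) with density
   f(x) P(b=j | p=x) w.r.t. Lebesgue x counting measure:
   I = sum_j int f(x) P(j|x) ln (P(j|x) / P(b=j)) dx. *)
Definition MI_pb (a b : R) : R :=
  RInt (fun x => beta_pdf a b x *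
                 (xlogxy x (Pb1 a b) + xlogxy (1 - x) (1 - Pb1 a b))) 0 1.

Definition qval (m : nat) (x : R) : Z := Rceil (x / (/ INR m)).


Definition Pq_b1 (a b : R) (m : nat) (k : Z) : R :=
  RInt (fun x => beta_pdf a b x * x *
                 (if Z.eq_dec (qval m x) k then 1 else 0)) 0 1.
Definition Pq_b0 (a b : R) (m : nat) (k : Z) : R :=
  RInt (fun x => beta_pdf a b x * (1 - x) *
                 (if Z.eq_dec (qval m x) k then 1 else 0)) 0 1.
Definition Pq (a b : R) (m : nat) (k : Z) : R :=
  RInt (fun x => beta_pdf a b x *
                 (if Z.eq_dec (qval m x) k then 1 else 0)) 0 1.

(* I(q;b) (nats). Since p in [0,1], q = ceil(m p) takes values in {0,...,m}
   (almost surely in {1,...,m}), so the sum over the support is over k = 0..m. *)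
Definition MI_qb (a b : R) (m : nat) : R :=
  sum_f_R0 (fun k =>
     xlogxy (Pq_b1 a b m (Z.of_nat k)) (Pq a b m (Z.of_nat k) * Pb1 a b)
   + xlogxy (Pq_b0 a b m (Z.of_nat k)) (Pq a b m (Z.of_nat k) * (1 - Pb1 a b))) m.

(* Let f be the (continuous, for a, b >= 1) Beta density, P = P(b = 1), and D(x || r) the
   binary Kullback-Leibler divergence. Then I(p;b) = E[D(p || P)], and since q is constant on
   each cell ((j-1)/m, j/m], I(q;b) = sum_j w_j D(r_j || P) with w_j the mass of the cell and
   r_j = E[p | q = j] its mean. The three-point identity
     D(x || P) = D(x || r) + D(r || P) + (x - r) * (affine in r, P)
   integrated against f over a cell, where the last term vanishes because r_j is the mean,
   gives I(p;b) - I(q;b) = sum_j int_cell f(x) D(x || r_j) dx >= 0. Bounding D(x || r) by the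
   chi-square term (x - r)^2 / (r (1 - r)) shows each cell contributes at most 2 (1/m) w_j,
   so the loss is at most 2 delta <= max(3, log (1/delta)) delta. *)

From Stdlib Require Import Reals ZArith Lra Lia.
From Coquelicot Require Import Coquelicot.
Open Scope R_scope.

Lemma ln_le_sub1 t : 0 < t -> ln t <= t - 1.
Proof. intros Ht. generalize (exp_ineq1_le (ln t)). rewrite exp_ln; lra. Qed.

Lemma continuous_eps_delta (g : R -> R) y :
  (forall eps, 0 < eps -> exists delta, 0 < delta /\
     forall z, Rabs (z - y) < delta -> Rabs (g z - g y) < eps) ->
  continuous g y.
Proof.
  intros H. apply continuity_pt_filterlim. intros eps Heps.
  destruct (H eps Heps) as (delta & Hd & Hz). exists delta.
  split; [exact Hd|]. intros z [_ Hzy]. exact (Hz z Hzy).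
Qed.

Lemma continuous_ext_pos (f g : R -> R) y : 0 < y ->
  (forall z, 0 < z -> f z = g z) -> continuous g y -> continuous f y.
Proof.
  intros Hy Heq Hc. apply continuous_ext_loc with g; [|exact Hc].
  exists (mkposreal y Hy). intros z Hz. symmetry; apply Heq.
  change (Rabs (z - y) < y) in Hz. apply Rabs_def2 in Hz. lra.
Qed.

Definition continuous01 (g : R -> R) : Prop :=
  forall x, 0 <= x <= 1 -> continuous g x.

Lemma continuous01_mult f g :
  continuous01 f -> continuous01 g -> continuous01 (fun x => f x * g x).
Proof.
  intros Hf Hg x Hx. exact (continuous_mult (K:=R_AbsRing) f g x (Hf x Hx) (Hg x Hx)).
Qed.

Lemma continuous01_plus f g :
  continuous01 f -> continuous01 g -> continuous01 (fun x => f x + g x).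
Proof.
  intros Hf Hg x Hx. exact (continuous_plus (V:=R_NormedModule) f g x (Hf x Hx) (Hg x Hx)).
Qed.

Lemma continuous01_minus f g :
  continuous01 f -> continuous01 g -> continuous01 (fun x => f x - g x).
Proof.
  intros Hf Hg x Hx. exact (continuous_minus (V:=R_NormedModule) f g x (Hf x Hx) (Hg x Hx)).
Qed.

Lemma continuous01_const c : continuous01 (fun _ => c).
Proof. intros x _. apply continuous_const. Qed.

Lemma continuous01_id : continuous01 (fun x => x).
Proof. intros x _. apply continuous_id. Qed.

Lemma continuous01_reflect g : continuous01 g -> continuous01 (fun x => g (1 - x)).
Proof.
  intros Hg x Hx. apply (continuous_comp (fun x => 1 - x) g).
  - apply (continuous01_minus _ _ (continuous01_const 1) continuous01_id x Hx).
  - apply Hg; lra.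
Qed.

#[local] Hint Resolve continuous01_mult continuous01_plus continuous01_minus
  continuous01_const continuous01_id : core.

Lemma ex_RInt_continuous01 g l h :
  continuous01 g -> 0 <= l -> l <= h -> h <= 1 -> ex_RInt g l h.
Proof.
  intros Hg Hl Hlh Hh. apply (ex_RInt_continuous (V:=R_CompleteNormedModule)).
  intros z Hz. rewrite Rmin_left, Rmax_right in Hz by lra. apply Hg; lra.
Qed.

Lemma RInt_plus_R (f g : R -> R) l h : ex_RInt f l h -> ex_RInt g l h ->
  RInt (fun x => f x + g x) l h = RInt f l h + RInt g l h.
Proof. intros Hf Hg. exact (RInt_plus (V:=R_CompleteNormedModule) f g l h Hf Hg). Qed.

Lemma RInt_scal_R (f : R -> R) c l h : ex_RInt f l h ->
  RInt (fun x => c * f x) l h = c * RInt f l h.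
Proof. intros Hf. exact (RInt_scal (V:=R_CompleteNormedModule) f l h c Hf). Qed.

Lemma RInt_ext_open (f g : R -> R) l h : l <= h ->
  (forall x, l < x < h -> f x = g x) -> RInt f l h = RInt g l h.
Proof. intros Hlh Heq. apply RInt_ext. rewrite Rmin_left, Rmax_right by exact Hlh. exact Heq. Qed.

Lemma RInt_one_minus_mul (f : R -> R) l h : ex_RInt f l h -> ex_RInt (fun x => x * f x) l h ->
  RInt (fun x => (1 - x) * f x) l h = RInt f l h - RInt (fun x => x * f x) l h.
Proof.
  intros Hf Hxf.
  rewrite (RInt_ext _ (fun x => f x + -1 * (x * f x)) l h) by (intros; simpl; ring).
  rewrite RInt_plus_R, RInt_scal_R; [simpl; ring|exact Hxf|exact Hf|].
  apply (ex_RInt_scal (V:=R_CompleteNormedModule)), Hxf.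
Qed.

Lemma RInt_interior_ext (H g : R -> R) l h : continuous01 g ->
  0 <= l -> l < h -> h <= 1 -> (forall x, l < x < h -> H x = g x) ->
  ex_RInt H l h /\ RInt H l h = RInt g l h.
Proof.
  intros Hg Hl Hlh Hh Heq.
  assert (Heq' : forall x, Rmin l h < x < Rmax l h -> g x = H x).
  { rewrite Rmin_left, Rmax_right by lra. intros x Hx. symmetry; auto. }
  split.
  - apply (ex_RInt_ext g H l h Heq'). apply ex_RInt_continuous01; [exact Hg|lra..].
  - symmetry. exact (RInt_ext g H l h Heq').
Qed.

(* [y ^ c] for [y > 0], extended to [y <= 0] by its limit at [0+], so that it is continuous
   on [[0, +oo)] when [c >= 0]. *)
Definition Rpower0 (c y : R) : R :=
  if Rlt_dec 0 y then Rpower y c else if Req_EM_T c 0 then 1 else 0.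

Lemma continuous_Rpower0_pos c y : 0 < y -> continuous (Rpower0 c) y.
Proof.
  intros Hy. apply continuous_ext_pos with (fun z => Rpower z c); [exact Hy| |].
  - intros z Hz. unfold Rpower0. destruct (Rlt_dec 0 z); [reflexivity|lra].
  - apply (ex_derive_continuous (K:=R_AbsRing) (V:=R_NormedModule)).
    exists (c * Rpower y (c - 1)). apply is_derive_Reals. now apply derivable_pt_lim_power.
Qed.

Lemma continuous_Rpower0_0 c : 0 <= c -> continuous (Rpower0 c) 0.
Proof.
  intros Hc. destruct (Req_EM_T c 0) as [->|Hc0].
  - apply continuous_ext with (fun _ => 1); [|apply continuous_const].
    intros z. unfold Rpower0. destruct (Rlt_dec 0 z).
    + now rewrite Rpower_O.
    + destruct (Req_EM_T 0 0); [reflexivity|lra].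
  - apply continuous_eps_delta. intros eps Heps.
    exists (Rpower eps (/ c)). split; [apply exp_pos|].
    intros z Hz. rewrite Rminus_0_r in Hz.
    unfold Rpower0 at 2. destruct (Rlt_dec 0 0); [lra|].
    destruct (Req_EM_T c 0); [lra|]. rewrite Rminus_0_r.
    unfold Rpower0. destruct (Rlt_dec 0 z) as [Hz0|Hz0].
    + rewrite Rabs_right in Hz by lra. rewrite Rabs_right by (left; apply exp_pos).
      rewrite <- (Rpower_1 eps Heps), <- (Rinv_l c Hc0), <- Rpower_mult.
      apply Rlt_Rpower_l; lra.
    + destruct (Req_EM_T c 0); [lra|]. rewrite Rabs_R0. exact Heps.
Qed.

Lemma continuous_Rpower0 c y : 0 <= c -> 0 <= y -> continuous (Rpower0 c) y.
Proof.
  intros Hc Hy. destruct (Rle_lt_or_eq_dec 0 y Hy) as [Hy0|<-].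
  - now apply continuous_Rpower0_pos.
  - now apply continuous_Rpower0_0.
Qed.

Definition xlnx (y : R) : R := if Rlt_dec 0 y then y * ln y else 0.

Lemma xlnx_pos y : 0 < y -> xlnx y = y * ln y.
Proof. intros Hy. unfold xlnx. destruct (Rlt_dec 0 y); [reflexivity|lra]. Qed.

(* Apply [ln t <= t - 1] at [t = 1 / sqrt z]. *)
Lemma abs_xlnx_le z : 0 < z <= 1 -> Rabs (z * ln z) <= 2 * sqrt z.
Proof.
  intros Hz. assert (Hs : 0 < sqrt z) by (apply sqrt_lt_R0; lra).
  assert (Hss : sqrt z * sqrt z = z) by (apply sqrt_sqrt; lra).
  assert (Hle := ln_le_sub1 (/ sqrt z) (Rinv_0_lt_compat _ Hs)).
  assert (Hneg : ln z <= 0) by (rewrite <- ln_1; apply ln_le; lra).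
  rewrite Rabs_left1 by (apply Rmult_le_0_l; lra).
  set (s := sqrt z) in *. rewrite <- Hss, ln_mult, ln_Rinv in * by lra.
  assert (s * s * - ln s <= s * s * (/ s - 1)) by (apply Rmult_le_compat_l; nra).
  replace (s * s * (/ s - 1)) with (s - s * s) in H by (field; lra).
  lra.
Qed.

Lemma continuous_xlnx y : 0 <= y -> continuous xlnx y.
Proof.
  intros Hy. destruct (Rle_lt_or_eq_dec 0 y Hy) as [Hy0|<-].
  - apply continuous_ext_pos with (fun z => z * ln z); [exact Hy0|exact xlnx_pos|].
    apply (ex_derive_continuous (K:=R_AbsRing) (V:=R_NormedModule)). auto_derive. lra.
  - apply continuous_eps_delta. intros eps Heps.
    exists (Rmin 1 (eps / 2 * (eps / 2))). split; [apply Rmin_pos; nra|].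
    intros z Hz. rewrite Rminus_0_r in Hz.
    unfold xlnx at 2. destruct (Rlt_dec 0 0); [lra|]. rewrite Rminus_0_r.
    unfold xlnx. destruct (Rlt_dec 0 z) as [Hz0|Hz0]; [|rewrite Rabs_R0; exact Heps].
    rewrite Rabs_right in Hz by lra.
    assert (Hz1 := Rmin_l 1 (eps / 2 * (eps / 2))).
    assert (Hz2 := Rmin_r 1 (eps / 2 * (eps / 2))).
    assert (Hsq : sqrt z < eps / 2).
    { rewrite <- (sqrt_square (eps / 2)) by lra. apply sqrt_lt_1_alt; lra. }
    assert (Habs := abs_xlnx_le z ltac:(lra)). lra.
Qed.

Lemma continuous01_xlnx : continuous01 xlnx.
Proof. intros x Hx. apply continuous_xlnx; lra. Qed.

Definition bin_kl (x r : R) : R :=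
  xlnx x - x * ln r + (xlnx (1 - x) - (1 - x) * ln (1 - r)).

Lemma continuous01_bin_kl r : continuous01 (fun x => bin_kl x r).
Proof. unfold bin_kl. auto using continuous01_xlnx, continuous01_reflect. Qed.

#[local] Hint Resolve continuous01_bin_kl : core.

Lemma bin_kl_interior x r : 0 < x < 1 -> 0 < r < 1 ->
  bin_kl x r = x * (ln x - ln r) + (1 - x) * (ln (1 - x) - ln (1 - r)).
Proof. intros Hx Hr. unfold bin_kl. rewrite !xlnx_pos by lra. ring. Qed.

Lemma bin_kl_nonneg x r : 0 < x < 1 -> 0 < r < 1 -> 0 <= bin_kl x r.
Proof.
  intros Hx Hr. rewrite bin_kl_interior by assumption.
  assert (H1 := ln_le_sub1 (r / x) ltac:(apply Rdiv_lt_0_compat; lra)).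
  assert (H2 := ln_le_sub1 ((1 - r) / (1 - x)) ltac:(apply Rdiv_lt_0_compat; lra)).
  rewrite ln_div in H1, H2 by lra.
  assert (x * (ln r - ln x) <= x * (r / x - 1)) by (apply Rmult_le_compat_l; lra).
  assert ((1 - x) * (ln (1 - r) - ln (1 - x)) <= (1 - x) * ((1 - r) / (1 - x) - 1))
    by (apply Rmult_le_compat_l; lra).
  replace (x * (r / x - 1)) with (r - x) in * by (field; lra).
  replace ((1 - x) * ((1 - r) / (1 - x) - 1)) with (x - r) in * by (field; lra).
  lra.
Qed.

Lemma bin_kl_le_chi2 x r : 0 < x < 1 -> 0 < r < 1 ->
  bin_kl x r <= (x - r) ^ 2 / (r * (1 - r)).
Proof.
  intros Hx Hr. rewrite bin_kl_interior by assumption.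
  assert (H1 := ln_le_sub1 (x / r) ltac:(apply Rdiv_lt_0_compat; lra)).
  assert (H2 := ln_le_sub1 ((1 - x) / (1 - r)) ltac:(apply Rdiv_lt_0_compat; lra)).
  rewrite ln_div in H1, H2 by lra.
  assert (x * (ln x - ln r) <= x * (x / r - 1)) by (apply Rmult_le_compat_l; lra).
  assert ((1 - x) * (ln (1 - x) - ln (1 - r)) <= (1 - x) * ((1 - x) / (1 - r) - 1))
    by (apply Rmult_le_compat_l; lra).
  replace ((x - r) ^ 2 / (r * (1 - r)))
    with (x * (x / r - 1) + (1 - x) * ((1 - x) / (1 - r) - 1)) by (field; lra).
  lra.
Qed.

Lemma bin_kl_three_point x r P : 0 < r < 1 -> 0 < P < 1 ->
  bin_kl x P = bin_kl x r + bin_kl r P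
             + (x - r) * (ln r - ln P - (ln (1 - r) - ln (1 - P))).
Proof. intros Hr HP. unfold bin_kl at 1 2. rewrite bin_kl_interior by assumption. ring. Qed.

Lemma sq_le_chord l h r x : l <= x <= h ->
  (x - r) ^ 2 <= (h - r) * (r - l) + (h + l - 2 * r) * (x - r).
Proof. intros Hx. nra. Qed.

Lemma chord_le l h r : 0 <= l <= r -> r <= h <= 1 ->
  (h - r) * (r - l) <= 2 * (h - l) * (r * (1 - r)).
Proof.
  intros Hl Hh. assert (Hhl : 0 <= h - l) by lra.
  destruct (Rle_dec r (1 / 2)).
  - assert ((h - r) * (r - l) <= (h - l) * r) by (apply Rmult_le_compat; lra).
    assert ((h - l) * r * 1 <= (h - l) * r * (2 * (1 - r))) by (apply Rmult_le_compat_l; nra).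
    nra.
  - assert ((h - r) * (r - l) <= (1 - r) * (h - l)) by (apply Rmult_le_compat; lra).
    assert ((1 - r) * (h - l) * 1 <= (1 - r) * (h - l) * (2 * r)) by (apply Rmult_le_compat_l; nra).
    nra.
Qed.

Lemma xlogxy_split mu w P : 0 < mu < w -> 0 < P < 1 ->
  xlogxy mu (w * P) + xlogxy (w - mu) (w * (1 - P)) = w * bin_kl (mu / w) P.
Proof.
  intros Hmu HP. assert (Hr : 0 < mu / w < 1).
  { split; [apply Rdiv_lt_0_compat; lra|]. apply Rlt_div_l; lra. }
  rewrite bin_kl_interior by assumption. unfold xlogxy.
  destruct (Req_EM_T mu 0); [lra|]. destruct (Req_EM_T (w - mu) 0); [lra|].
  replace (mu / (w * P)) with (mu / w / P) by (field; lra).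
  replace ((w - mu) / (w * (1 - P))) with ((1 - mu / w) / (1 - P)) by (field; lra).
  rewrite !ln_div by lra. field. lra.
Qed.

Section Cell.

Variables (f : R -> R) (l h : R).
Hypotheses (Hf : continuous01 f) (Hf0 : forall x, 0 < x < 1 -> 0 <= f x)
  (Hl : 0 <= l) (Hlh : l < h) (Hh : h <= 1).

Let w := RInt f l h.
Let mu := RInt (fun x => x * f x) l h.
Hypotheses (Hmu : 0 < mu) (Hmuw : mu < w).
Let r := mu / w.

Let ex_RInt_cell g : continuous01 g -> ex_RInt g l h.
Proof. intros Hg. apply ex_RInt_continuous01; [exact Hg|lra..]. Qed.

Let RInt_const_mul c : RInt (fun x => c * f x) l h = c * w.
Proof. apply RInt_scal_R, ex_RInt_cell, Hf. Qed.

Lemma cell_mean_bounds : l <= r <= h.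
Proof.
  assert (Hw : 0 < w) by lra.
  assert (Hlo : l * w <= mu).
  { rewrite <- RInt_const_mul. apply RInt_le; [lra|apply ex_RInt_cell..|]; auto.
    intros x Hx. apply Rmult_le_compat_r; [apply Hf0|]; lra. }
  assert (Hhi : mu <= h * w).
  { rewrite <- RInt_const_mul. apply RInt_le; [lra|apply ex_RInt_cell..|]; auto.
    intros x Hx. apply Rmult_le_compat_r; [apply Hf0|]; lra. }
  split; [apply Rle_div_r|apply Rle_div_l]; lra.
Qed.

Let r_interior : 0 < r < 1.
Proof. split; [apply Rdiv_lt_0_compat|apply Rlt_div_l]; lra. Qed.

Lemma cell_gap_eq P : 0 < P < 1 ->
  RInt (fun x => f x * bin_kl x P) l h - w * bin_kl r P
  = RInt (fun x => f x * bin_kl x r) l h.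
Proof.
  intros HP. set (L := ln r - ln P - (ln (1 - r) - ln (1 - P))).
  assert (Hpt : forall x, f x * bin_kl x P
    = f x * bin_kl x r + ((bin_kl r P - L * r) * f x + L * (x * f x))).
  { intros x. rewrite (bin_kl_three_point x r P) by assumption. unfold L. ring. }
  rewrite (RInt_ext _ _ l h (fun x _ => Hpt x)).
  rewrite !RInt_plus_R, RInt_const_mul, RInt_scal_R by (apply ex_RInt_cell; auto).
  fold mu. replace mu with (r * w) by (unfold r; field; lra). ring.
Qed.

Lemma cell_gap_nonneg : 0 <= RInt (fun x => f x * bin_kl x r) l h.
Proof.
  apply RInt_ge_0; [lra|apply ex_RInt_cell; auto|].
  intros x Hx. apply Rmult_le_pos; [apply Hf0; lra|apply bin_kl_nonneg; lra].
Qed.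

(* [bin_kl x r] is at most the chi-square term, which lies below the chord of the parabola
   over [[l, h]]; the affine part integrates to zero because [r] is the mean. *)
Lemma cell_gap_le : RInt (fun x => f x * bin_kl x r) l h <= 2 * (h - l) * w.
Proof.
  assert (Hw : 0 < w) by lra. assert (Hrlh := cell_mean_bounds).
  set (V := r * (1 - r)). assert (HV : 0 < V) by (unfold V; nra).
  set (c2 := (h + l - 2 * r) / V). set (c1 := (h - r) * (r - l) / V - c2 * r).
  apply Rle_trans with (RInt (fun x => c1 * f x + c2 * (x * f x)) l h).
  - apply RInt_le; [lra|apply ex_RInt_cell; auto..|].
    intros x Hx. apply Rle_trans with (f x * ((x - r) ^ 2 / V)).
    + apply Rmult_le_compat_l; [apply Hf0; lra|apply bin_kl_le_chi2; lra].
    + replace (c1 * f x + c2 * (x * f x))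
        with (f x * (((h - r) * (r - l) + (h + l - 2 * r) * (x - r)) / V))
        by (unfold c1, c2; field; lra).
      apply Rmult_le_compat_l; [apply Hf0; lra|].
      apply Rmult_le_compat_r; [left; apply Rinv_0_lt_compat, HV|apply sq_le_chord; lra].
  - rewrite RInt_plus_R, RInt_const_mul, RInt_scal_R by (apply ex_RInt_cell; auto).
    fold mu. replace mu with (r * w) by (unfold r; field; lra).
    replace (c1 * w + c2 * (r * w)) with ((h - r) * (r - l) / V * w) by (unfold c1; ring).
    apply Rmult_le_compat_r; [lra|]. apply Rle_div_l; [exact HV|].
    apply chord_le; lra.
Qed.

End Cell.

Lemma sum_f_R0_single (A : nat -> R) n j : (j <= n)%nat ->
  (forall i, (i <= n)%nat -> i <> j -> A i = 0) -> sum_f_R0 A n = A j.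
Proof.
  induction n as [|n IH]; intros Hj H0; simpl.
  - now replace j with O by lia.
  - destruct (Nat.eq_dec j (S n)) as [->|Hne].
    + rewrite sum_eq_R0 by (intros i Hi; apply H0; lia). ring.
    + rewrite IH, (H0 (S n)); try lia; [ring|]. intros i Hi Hij. apply H0; lia.
Qed.

Lemma RInt_Chasles_sum (H : R -> R) (t : nat -> R) n :
  (forall j, (j <= n)%nat -> ex_RInt H (t j) (t (S j))) ->
  RInt H (t O) (t (S n)) = sum_f_R0 (fun j => RInt H (t j) (t (S j))) n.
Proof.
  intros Hex.
  enough (ex_RInt H (t O) (t (S n))
          /\ RInt H (t O) (t (S n)) = sum_f_R0 (fun j => RInt H (t j) (t (S j))) n)
    by tauto.
  induction n as [|n IH]; [split; [apply Hex|]; auto|].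
  destruct IH as [IHex IHeq]; [intros j Hj; apply Hex; lia|].
  assert (Hlast := Hex (S n) (le_n _)). split.
  - exact (ex_RInt_Chasles H _ _ _ IHex Hlast).
  - simpl sum_f_R0. rewrite <- IHeq.
    exact (eq_sym (RInt_Chasles (V:=R_CompleteNormedModule) H _ _ _ IHex Hlast)).
Qed.

Definition grid (m j : nat) : R := INR j / INR m.

Lemma grid_bounds m j : (j < m)%nat ->
  0 <= grid m j /\ grid m j < grid m (S j) /\ grid m (S j) <= 1.
Proof.
  intros Hj. unfold grid. assert (Hm : 0 < INR m) by (apply lt_0_INR; lia).
  assert (Hj1 : INR (S j) <= INR m) by (apply le_INR; lia).
  rewrite S_INR in *. assert (0 <= INR j) by apply pos_INR.
  repeat split.
  - apply Rdiv_le_0_compat; lra.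
  - apply Rmult_lt_compat_r; [apply Rinv_0_lt_compat|]; lra.
  - apply Rle_div_l; lra.
Qed.

Lemma grid_width m j : (0 < m)%nat -> grid m (S j) - grid m j = / INR m.
Proof. intros Hm. unfold grid. rewrite S_INR. field. apply not_0_INR. lia. Qed.

Lemma RInt_grid (H : R -> R) n :
  (forall j, (j <= n)%nat -> ex_RInt H (grid (S n) j) (grid (S n) (S j))) ->
  RInt H 0 1 = sum_f_R0 (fun j => RInt H (grid (S n) j) (grid (S n) (S j))) n.
Proof.
  intros Hex. rewrite <- (RInt_Chasles_sum H (grid (S n)) n Hex).
  assert (HS : INR (S n) <> 0) by (apply not_0_INR; lia).
  unfold grid. change (INR 0) with 0. f_equal; field; exact HS.
Qed.

Lemma qval_grid m j x : (0 < m)%nat -> grid m j < x < grid m (S j) ->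
  qval m x = Z.of_nat (S j).
Proof.
  intros Hm Hx. unfold grid in Hx. assert (HmR : 0 < INR m) by (apply lt_0_INR; lia).
  rewrite S_INR in Hx. destruct Hx as [Hlo Hhi].
  apply Rlt_div_l in Hlo; [|lra]. apply Rlt_div_r in Hhi; [|lra].
  unfold qval, Rceil, Int_part.
  replace (x / / INR m) with (x * INR m) by (field; lra).
  rewrite <- (tech_up (- (x * INR m)) (- Z.of_nat j)).
  - lia.
  - rewrite opp_IZR, <- INR_IZR_INZ. lra.
  - rewrite opp_IZR, <- INR_IZR_INZ. lra.
Qed.

Section Indicator.

Variables (F g : R -> R) (n : nat).
Hypotheses (Hg : continuous01 g) (HFg : forall x, 0 < x < 1 -> F x = g x).

Lemma RInt_indicator_cell k i : (i <= n)%nat ->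
  let H x := F x * (if Z.eq_dec (qval (S n) x) k then 1 else 0) in
  ex_RInt H (grid (S n) i) (grid (S n) (S i))
  /\ RInt H (grid (S n) i) (grid (S n) (S i))
     = if Z.eq_dec (Z.of_nat (S i)) k then RInt g (grid (S n) i) (grid (S n) (S i)) else 0.
Proof.
  intros Hi H. destruct (grid_bounds (S n) i ltac:(lia)) as (Hlo & Hlt & Hhi).
  destruct (Z.eq_dec (Z.of_nat (S i)) k) as [<-|Hne].
  - apply RInt_interior_ext; [exact Hg|lra..|]. intros x Hx. unfold H.
    rewrite (qval_grid (S n) i x) by (lia || exact Hx).
    destruct (Z.eq_dec _ _) as [_|]; [|congruence]. rewrite Rmult_1_r. apply HFg; lra.
  - destruct (RInt_interior_ext H (fun _ => 0) _ _ (continuous01_const 0) Hlo Hlt Hhi)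
      as [Hex Heq].
    + intros x Hx. unfold H. rewrite (qval_grid (S n) i x) by (lia || exact Hx).
      destruct (Z.eq_dec _ _); [congruence|]. apply Rmult_0_r.
    + split; [exact Hex|]. rewrite Heq, RInt_const. apply Rmult_0_r.
Qed.

Lemma RInt_indicator_hit j : (j <= n)%nat ->
  RInt (fun x => F x * (if Z.eq_dec (qval (S n) x) (Z.of_nat (S j)) then 1 else 0)) 0 1
  = RInt g (grid (S n) j) (grid (S n) (S j)).
Proof.
  intros Hj. rewrite (RInt_grid _ n) by (intros i Hi; exact (proj1 (RInt_indicator_cell _ i Hi))).
  rewrite (sum_f_R0_single _ n j Hj).
  - rewrite (proj2 (RInt_indicator_cell _ j Hj)).
    destruct (Z.eq_dec _ _); [reflexivity|congruence].
  - intros i Hi Hij. rewrite (proj2 (RInt_indicator_cell _ i Hi)).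
    destruct (Z.eq_dec _ _) as [e|]; [apply Nat2Z.inj in e; lia|reflexivity].
Qed.

Lemma RInt_indicator_0 :
  RInt (fun x => F x * (if Z.eq_dec (qval (S n) x) (Z.of_nat 0) then 1 else 0)) 0 1 = 0.
Proof.
  rewrite (RInt_grid _ n) by (intros i Hi; exact (proj1 (RInt_indicator_cell _ i Hi))).
  apply sum_eq_R0. intros i Hi. rewrite (proj2 (RInt_indicator_cell _ i Hi)).
  destruct (Z.eq_dec _ _); [lia|reflexivity].
Qed.

End Indicator.

Section Beta.

Variables a b : R.
Hypotheses (Ha : 1 <= a) (Hb : 1 <= b).

Let kernel x := Rpower0 (a - 1) x * Rpower0 (b - 1) (1 - x).

Let kernel_interior x : 0 < x < 1 -> beta_kernel a b x = kernel x.
Proof.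
  intros Hx. unfold beta_kernel, kernel, Rpower0.
  destruct (Rlt_dec 0 x); [|lra]. destruct (Rlt_dec x 1); [|lra].
  destruct (Rlt_dec 0 (1 - x)); [reflexivity|lra].
Qed.

Let kernel_pos x : 0 < x < 1 -> 0 < kernel x.
Proof.
  intros Hx. rewrite <- kernel_interior by exact Hx. unfold beta_kernel.
  destruct (Rlt_dec 0 x); [|lra]. destruct (Rlt_dec x 1); [|lra].
  apply Rmult_lt_0_compat; apply exp_pos.
Qed.

Let continuous01_kernel : continuous01 kernel.
Proof.
  unfold kernel. apply continuous01_mult; [|apply (continuous01_reflect (Rpower0 (b - 1)))];
    intros y Hy; apply continuous_Rpower0; lra.
Qed.

Let normalizer_eq : RInt (beta_kernel a b) 0 1 = RInt kernel 0 1.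
Proof.
  apply RInt_ext_open; [lra|exact kernel_interior].
Qed.

Let normalizer_pos : 0 < RInt (beta_kernel a b) 0 1.
Proof.
  rewrite normalizer_eq. apply RInt_gt_0; [lra|exact kernel_pos|].
  intros x Hx. apply continuous01_kernel, Hx.
Qed.

Definition beta_density x := kernel x / RInt (beta_kernel a b) 0 1.

Lemma continuous01_beta_density : continuous01 beta_density.
Proof. apply continuous01_mult; [exact continuous01_kernel|apply continuous01_const]. Qed.

Lemma beta_density_pos x : 0 < x < 1 -> 0 < beta_density x.
Proof. intros Hx. apply Rdiv_lt_0_compat; [apply kernel_pos, Hx|exact normalizer_pos]. Qed.

Lemma beta_pdf_density x : 0 < x < 1 -> beta_pdf a b x = beta_density x.
Proof. intros Hx. unfold beta_pdf, beta_density. now rewrite kernel_interior. Qed.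

Lemma RInt_beta_density : RInt beta_density 0 1 = 1.
Proof.
  unfold beta_density, Rdiv. rewrite (RInt_ext _ (fun x => / RInt (beta_kernel a b) 0 1 * kernel x))
    by (intros; apply Rmult_comm).
  rewrite RInt_scal_R, <- normalizer_eq.
  - simpl. field. apply Rgt_not_eq, normalizer_pos.
  - apply ex_RInt_continuous01; [exact continuous01_kernel|lra..].
Qed.

End Beta.

Section Quantization.

Variables (a b : R) (f : R -> R) (n : nat).
Hypotheses (Hf : continuous01 f) (Hf_pos : forall x, 0 < x < 1 -> 0 < f x)
  (Hpdf : forall x, 0 < x < 1 -> beta_pdf a b x = f x) (Hmass : RInt f 0 1 = 1).

Let P := Pb1 a b.
Let w j := RInt f (grid (S n) j) (grid (S n) (S j)).
Let mu j := RInt (fun x => x * f x) (grid (S n) j) (grid (S n) (S j)).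

Let RInt_weighted_pos (c : R -> R) l h : continuous01 c -> (forall x, 0 < x < 1 -> 0 < c x) ->
  0 <= l -> l < h -> h <= 1 -> 0 < RInt (fun x => c x * f x) l h.
Proof.
  intros Hc Hc_pos Hl Hlh Hh. apply RInt_gt_0; [exact Hlh| |].
  - intros x Hx. apply Rmult_lt_0_compat; [apply Hc_pos|apply Hf_pos]; lra.
  - intros x Hx. apply continuous01_mult; auto; lra.
Qed.

Lemma Pb1_interior : 0 < P < 1.
Proof.
  assert (HP : P = RInt (fun x => x * f x) 0 1).
  { apply RInt_ext_open; [lra|]. intros x Hx. now rewrite Hpdf. }
  assert (H1P : 1 - P = RInt (fun x => (1 - x) * f x) 0 1).
  { rewrite HP, RInt_one_minus_mul, Hmass; [reflexivity|apply ex_RInt_continuous01; auto; lra..]. }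
  split; [rewrite HP|apply Rlt_0_minus; rewrite H1P];
    apply RInt_weighted_pos; auto; intros; lra.
Qed.

Let cell_bounds j : (j <= n)%nat ->
  0 <= grid (S n) j /\ grid (S n) j < grid (S n) (S j) /\ grid (S n) (S j) <= 1.
Proof. intros Hj. apply grid_bounds. lia. Qed.

Lemma cell_moment_bounds j : (j <= n)%nat -> 0 < mu j < w j.
Proof.
  intros Hj. destruct (cell_bounds j Hj) as (Hlo & Hlt & Hhi). split.
  - apply RInt_weighted_pos; auto; intros; lra.
  - apply Rlt_0_minus. unfold w, mu.
    rewrite <- RInt_one_minus_mul by (apply ex_RInt_continuous01; auto; lra).
    apply RInt_weighted_pos; auto; intros; lra.
Qed.

Lemma MI_pb_grid :
  MI_pb a b = sum_f_R0 (fun j => RInt (fun x => f x * bin_kl x P)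
                                   (grid (S n) j) (grid (S n) (S j))) n.
Proof.
  assert (HP := Pb1_interior).
  unfold MI_pb. fold P. rewrite (RInt_ext_open _ (fun x => f x * bin_kl x P)); [|lra|].
  - apply RInt_grid. intros j Hj. destruct (cell_bounds j Hj) as (Hlo & Hlt & Hhi).
    apply ex_RInt_continuous01; auto; lra.
  - intros x Hx.
    rewrite Hpdf, bin_kl_interior by assumption. unfold xlogxy.
    destruct (Req_EM_T x 0); [lra|]. destruct (Req_EM_T (1 - x) 0); [lra|].
    rewrite !ln_div by lra. ring.
Qed.

Lemma MI_qb_grid :
  MI_qb a b (S n) = sum_f_R0 (fun j => w j * bin_kl (mu j / w j) P) n.
Proof.
  assert (HP := Pb1_interior).
  unfold MI_qb. rewrite decomp_sum by lia. simpl pred.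
  unfold Pq_b1 at 1, Pq_b0 at 1.
  rewrite (RInt_indicator_0 (fun x => beta_pdf a b x * x) (fun x => x * f x)),
    (RInt_indicator_0 (fun x => beta_pdf a b x * (1 - x)) (fun x => (1 - x) * f x));
    try (intros x Hx; rewrite Hpdf; [ring|exact Hx]); auto.
  unfold xlogxy at 1 2. destruct (Req_EM_T 0 0); [|lra]. rewrite !Rplus_0_l.
  apply sum_eq. intros j Hj. unfold Pq_b1, Pq_b0, Pq.
  rewrite (RInt_indicator_hit (fun x => beta_pdf a b x * x) (fun x => x * f x)),
    (RInt_indicator_hit (fun x => beta_pdf a b x * (1 - x)) (fun x => (1 - x) * f x)),
    (RInt_indicator_hit (beta_pdf a b) f);
    try (intros x Hx; rewrite Hpdf; [ring|exact Hx]); auto.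
  destruct (cell_bounds j Hj) as (Hlo & Hlt & Hhi).
  rewrite RInt_one_minus_mul by (apply ex_RInt_continuous01; auto; lra).
  apply xlogxy_split; [apply cell_moment_bounds, Hj|exact HP].
Qed.

Lemma MI_gap_bounds : 0 <= MI_pb a b - MI_qb a b (S n) <= 2 / INR (S n).
Proof.
  assert (HP := Pb1_interior).
  assert (Hf0 : forall x, 0 < x < 1 -> 0 <= f x) by (intros x Hx; left; auto).
  set (gap j := RInt (fun x => f x * bin_kl x (mu j / w j)) (grid (S n) j) (grid (S n) (S j))).
  assert (Hgap : MI_pb a b - MI_qb a b (S n) = sum_f_R0 gap n).
  { rewrite MI_pb_grid, MI_qb_grid, <- minus_sum. apply sum_eq. intros j Hj.
    destruct (cell_bounds j Hj) as (Hlo & Hlt & Hhi).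
    destruct (cell_moment_bounds j Hj). apply cell_gap_eq; auto. }
  assert (Hw1 : sum_f_R0 w n = 1).
  { rewrite <- Hmass. symmetry. apply RInt_grid. intros j Hj.
    destruct (cell_bounds j Hj) as (Hlo & Hlt & Hhi). apply ex_RInt_continuous01; auto; lra. }
  rewrite Hgap. split.
  - rewrite <- (sum_eq_R0 (fun _ => 0) n) at 1 by auto. apply sum_Rle. intros j Hj.
    destruct (cell_bounds j Hj) as (Hlo & Hlt & Hhi).
    destruct (cell_moment_bounds j Hj). unfold gap. apply cell_gap_nonneg; auto.
  - rewrite <- (Rmult_1_r (2 / INR (S n))), <- Hw1, scal_sum. apply sum_Rle. intros j Hj.
    destruct (cell_bounds j Hj) as (Hlo & Hlt & Hhi).
    destruct (cell_moment_bounds j Hj).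
    replace (w j * (2 / INR (S n)))
      with (2 * (grid (S n) (S j) - grid (S n) j) * w j)
      by (rewrite grid_width by lia; unfold Rdiv; ring).
    unfold gap. apply cell_gap_le; auto.
Qed.

End Quantization.

Theorem lemma7 (a b : R) (m : nat) :
  1 <= a -> 1 <= b -> (2 <= m)%nat ->
  let delta := / INR m in
  MI_qb a b m <= MI_pb a b /\
  MI_pb a b - Rmax 3 (ln (/ delta)) * delta <= MI_qb a b m.
Proof.
  intros Ha Hb Hm delta.
  destruct m as [|n]; [lia|].
  destruct (MI_gap_bounds a b (beta_density a b) n
              (continuous01_beta_density a b Ha Hb) (beta_density_pos a b Ha Hb)
              (beta_pdf_density a b) (RInt_beta_density a b Ha Hb)) as [Hlo Hhi].
  assert (Hdelta : 0 < delta) by (apply Rinv_0_lt_compat, lt_0_INR; lia).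
  assert (H3 : 3 * delta <= Rmax 3 (ln (/ delta)) * delta)
    by (apply Rmult_le_compat_r; [lra|apply Rmax_l]).
  unfold Rdiv in Hhi. fold delta in Hhi.
  split; lra.
Qed.
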